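(* For every integer $n\ge 2$, $$C^0_{L_n}=1+2\cos\Big(\frac{\pi}{n+1}\Big)\le C_{L_n}<3,$$ and moreover $C^0_{L_n}=C_{L_n}$ holds if and only if $2\le n\le 8$.
   Context: For $n\in\mathbb N$, $L_n$ is the path graph with vertex set $\{1,\dots,n\}$ and edges $\{j,j+1\}$, $1\le j\le n-1$, equipped with the graph (shortest path) distance $d$. A measure $\mu$ on a graph is a weight function $\mu:V\to(0,\infty)$, with $\mu(A)=\sum_{v\in A}\mu(v)$. Closed balls are $B(x,r)=\{y:d(x,y)\le r\}$. The doubling constant of $\mu$ is $C_\mu=\sup\{\mu(B(x,2k+1))/\mu(B(x,k)): x\in V,\ k\in\{0,1,2,\dots\}\}$ (equivalently, $\sup_{x,r>0}\mu(B^{o}(x,2r))/\mu(B^{o}(x,r))$ with open balls), and $\mu$ is doubling if $C_\mu<\infty$. The least doubling constant of a graph $G$ is $C_G=\inf\{C_\mu:\mu \text{ doubling on } G\}$. Also $C^0_\mu=\sup_{x\in V}\mu(B(x,1))/\mu(x)$ and $C^0_G=\inf_\mu C^0_\mu$. *)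

From Stdlib Require Import Reals List Arith.
From Coquelicot Require Import Coquelicot.
Open Scope R_scope.

(* Path graph L_n: vertex set {1,...,n}, edges {j, j+1}.
   Its shortest-path distance is |x - y|. *)
Definition vertex (n : nat) (v : nat) : Prop := (1 <= v <= n)%nat.
Definition path_dist (x y : nat) : nat := ((x - y) + (y - x))%nat.

Definition is_measure (n : nat) (mu : nat -> R) : Prop :=
  forall v, vertex n v -> 0 < mu v.

Definition ball_mass (n : nat) (mu : nat -> R) (x r : nat) : R :=
  fold_right Rplus 0
    (map (fun y => if Nat.leb (path_dist x y) r then mu y else 0) (seq 1 n)).

Definition doubling_const (n : nat) (mu : nat -> R) : Rbar :=
  Lub_Rbar (fun c => exists x k, vertex n x /\
     c = ball_mass n mu x (2 * k + 1) / ball_mass n mu x k).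

Definition least_doubling_const (n : nat) : Rbar :=
  Glb_Rbar (fun c => exists mu, is_measure n mu /\ doubling_const n mu = Finite c).

Definition doubling_const0 (n : nat) (mu : nat -> R) : Rbar :=
  Lub_Rbar (fun c => exists x, vertex n x /\ c = ball_mass n mu x 1 / mu x).

Definition least_doubling_const0 (n : nat) : Rbar :=
  Glb_Rbar (fun c => exists mu, is_measure n mu /\ doubling_const0 n mu = Finite c).

From Stdlib Require Import Reals Lra Lia List Arith.
From Coquelicot Require Import Coquelicot.
Open Scope R_scope.

(* The vector [s_j = sin (j pi / (n+1))] is the positive eigenvector, with eigenvalue
   [lambda = 1 + 2 cos (pi / (n+1))], of the symmetric operator [mu |-> mu(B(., 1))] on L_n.
   Pairing [mu(B(x,1)) <= c mu(x)] with [s] gives [lambda <= c] for every measure, and [s]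
   itself attains [lambda]; this computes C^0 and shows C^0 <= C.  A slightly concave
   perturbation of the counting measure has doubling constant below 3.  For [n <= 8] the sine
   measure is doubling with constant exactly [lambda] (a finite numerical check).  For [n >= 9],
   the doubling inequality for [B(1,3)] against [B(1,1)] forces [a^3 - 3a - 1 <= 0] for
   [a = c - 1], up to an error proportional to [c - lambda]; but [a = 2 cos (pi / (n+1))] gives
   [a^3 - 3a - 1 = 2 cos (3 pi / (n+1)) - 1 > 0], so C stays a fixed amount above [lambda]. *)

Fixpoint vsum (f : nat -> R) (m : nat) : R :=
  match m with O => 0 | S m' => vsum f m' + f (S m') end.

Lemma vsum_S f m : vsum f (S m) = vsum f m + f (S m).
Proof. reflexivity. Qed.

Lemma vsum_ext f g m : (forall i, (1 <= i <= m)%nat -> f i = g i) -> vsum f m = vsum g m.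
Proof.
  induction m as [|m IH]; intros H; simpl; [reflexivity|].
  rewrite IH by (intros; apply H; lia). rewrite H by lia. reflexivity.
Qed.

Lemma vsum_add f g m : vsum (fun i => f i + g i) m = vsum f m + vsum g m.
Proof. induction m as [|m IH]; simpl; [ring | rewrite IH; ring]. Qed.

Lemma vsum_scal c f m : vsum (fun i => c * f i) m = c * vsum f m.
Proof. induction m as [|m IH]; simpl; [ring | rewrite IH; ring]. Qed.

Lemma vsum_const c m : vsum (fun _ => c) m = INR m * c.
Proof. induction m as [|m IH]; simpl vsum; [simpl; ring | rewrite IH, S_INR; ring]. Qed.

Lemma vsum_le f g m : (forall i, (1 <= i <= m)%nat -> f i <= g i) -> vsum f m <= vsum g m.
Proof.
  induction m as [|m IH]; intros H; simpl; [lra|].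
  apply Rplus_le_compat; [apply IH; intros; apply H | apply H]; lia.
Qed.

Lemma vsum_ge0 f m : (forall i, (1 <= i <= m)%nat -> 0 <= f i) -> 0 <= vsum f m.
Proof.
  intros H. replace 0 with (vsum (fun _ => 0) m) by (rewrite vsum_const; ring).
  apply vsum_le, H.
Qed.

Lemma vsum_ge_term f m j : (forall i, (1 <= i <= m)%nat -> 0 <= f i) -> (1 <= j <= m)%nat ->
  f j <= vsum f m.
Proof.
  induction m as [|m IH]; intros H Hj; [lia|]. simpl.
  destruct (Nat.eq_dec j (S m)) as [->|Hne].
  - pose proof (vsum_ge0 f m ltac:(intros; apply H; lia)). lra.
  - pose proof (IH ltac:(intros; apply H; lia) ltac:(lia)). pose proof (H (S m) ltac:(lia)). lra.
Qed.

Lemma vsum_shift a b m : b O = 0 ->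
  vsum (fun x => a x * b (x - 1)%nat) m = vsum (fun x => a (S x) * b x) m - a (S m) * b m.
Proof.
  intros Hb. induction m as [|m IH]; simpl vsum.
  - rewrite Hb. ring.
  - rewrite IH, Nat.sub_0_r. ring.
Qed.

Lemma vsum_point a v m : vsum (fun y => if Nat.eqb y a then v else 0) m =
  if (Nat.leb 1 a && Nat.leb a m)%bool then v else 0.
Proof.
  induction m as [|m IH].
  - destruct (Nat.leb_spec 1 a), (Nat.leb_spec a 0); simpl; lra || (exfalso; lia).
  - rewrite vsum_S, IH. destruct (Nat.eqb_spec (S m) a), (Nat.leb_spec 1 a), (Nat.leb_spec a m),
      (Nat.leb_spec a (S m)); simpl; lra || (exfalso; lia).
Qed.

Definition ext0 (n : nat) (mu : nat -> R) (a : nat) : R :=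
  if (Nat.leb 1 a && Nat.leb a n)%bool then mu a else 0.

Lemma ext0_in n mu a : (1 <= a <= n)%nat -> ext0 n mu a = mu a.
Proof.
  intros H. unfold ext0. destruct (Nat.leb_spec 1 a), (Nat.leb_spec a n); simpl; auto; lia.
Qed.

Lemma ext0_gt n mu a : (n < a)%nat -> ext0 n mu a = 0.
Proof. intros H. unfold ext0. rewrite (proj2 (Nat.leb_gt a n) H), Bool.andb_false_r. reflexivity. Qed.

Lemma ext0_ge0 n mu a : is_measure n mu -> 0 <= ext0 n mu a.
Proof.
  intros Hmu. unfold ext0. destruct (Nat.leb_spec 1 a), (Nat.leb_spec a n); simpl; try lra.
  apply Rlt_le, Hmu. unfold vertex. lia.
Qed.

Lemma vsum_point_mass n mu a :
  vsum (fun y => if Nat.eqb y a then mu y else 0) n = ext0 n mu a.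
Proof.
  rewrite (vsum_ext _ (fun y => if Nat.eqb y a then mu a else 0)).
  - apply vsum_point.
  - intros i _. destruct (Nat.eqb_spec i a); subst; reflexivity.
Qed.

Lemma ball_mass_vsum n mu x r :
  ball_mass n mu x r = vsum (fun y => if Nat.leb (path_dist x y) r then mu y else 0) n.
Proof.
  unfold ball_mass. generalize (fun y => if Nat.leb (path_dist x y) r then mu y else 0).
  intros f. induction n as [|n IH]; [reflexivity|].
  rewrite seq_S, map_app, fold_right_app. simpl vsum. rewrite <- IH.
  simpl. generalize (map f (seq 1 n)). intros l.
  induction l as [|a l IHl]; simpl; [ring | rewrite IHl; ring].
Qed.

Lemma ball_mass_0 n mu x : vertex n x -> ball_mass n mu x 0 = mu x.
Proof.
  intros Hx. rewrite ball_mass_vsum, <- (ext0_in n mu x Hx), <- vsum_point_mass.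
  apply vsum_ext. intros y _. unfold path_dist.
  destruct (Nat.eqb_spec y x), (Nat.leb_spec (x - y + (y - x)) 0); subst; reflexivity || (exfalso; lia).
Qed.

Lemma ball_mass_1 n mu x : vertex n x ->
  ball_mass n mu x 1 = ext0 n mu (x - 1) + ext0 n mu x + ext0 n mu (x + 1).
Proof.
  intros Hx. unfold vertex in Hx. rewrite ball_mass_vsum, <- !vsum_point_mass, <- !vsum_add.
  apply vsum_ext. intros y _. unfold path_dist.
  destruct (Nat.eqb_spec y (x - 1)), (Nat.eqb_spec y x), (Nat.eqb_spec y (x + 1)),
    (Nat.leb_spec (x - y + (y - x)) 1); lra || (exfalso; lia).
Qed.

Lemma ball_mass_ge_center n mu x r : is_measure n mu -> vertex n x -> mu x <= ball_mass n mu x r.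
Proof.
  intros Hmu Hx. rewrite ball_mass_vsum.
  replace (mu x) with (if Nat.leb (path_dist x x) r then mu x else 0)
    by (unfold path_dist; rewrite Nat.sub_diag; reflexivity).
  apply (vsum_ge_term (fun y => if Nat.leb (path_dist x y) r then mu y else 0)); [|exact Hx].
  intros y Hy. destruct (Nat.leb _ _); [apply Rlt_le, Hmu, Hy | lra].
Qed.

Lemma ball_mass_pos n mu x r : is_measure n mu -> vertex n x -> 0 < ball_mass n mu x r.
Proof.
  intros Hmu Hx. apply Rlt_le_trans with (mu x); [apply Hmu, Hx | apply ball_mass_ge_center; auto].
Qed.

Lemma ball_mass_full n mu x r : vertex n x -> (n <= r + 1)%nat -> ball_mass n mu x r = vsum mu n.
Proof.
  intros Hx Hr. rewrite ball_mass_vsum. apply vsum_ext. intros y Hy.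
  unfold vertex, path_dist in *. destruct (Nat.leb_spec (x - y + (y - x)) r); reflexivity || (exfalso; lia).
Qed.

Lemma ball_mass_restrict n m mu x r : (m <= n)%nat ->
  (forall y, (m < y)%nat -> (r < path_dist x y)%nat) -> ball_mass n mu x r = ball_mass m mu x r.
Proof.
  intros Hmn Hfar. rewrite !ball_mass_vsum. induction Hmn as [|n Hmn IH]; [reflexivity|].
  simpl vsum. rewrite IH. destruct (Nat.leb_spec (path_dist x (S n)) r); [|ring].
  specialize (Hfar (S n) ltac:(lia)). lia.
Qed.

Lemma ball_mass_le n mu nu x r : (forall y, vertex n y -> mu y <= nu y) ->
  ball_mass n mu x r <= ball_mass n nu x r.
Proof.
  intros H. rewrite !ball_mass_vsum. apply vsum_le. intros y Hy.
  destruct (Nat.leb _ _); [apply H, Hy | lra].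
Qed.

Lemma ball_mass_const n c x r : ball_mass n (fun _ => c) x r = c * ball_mass n (fun _ => 1) x r.
Proof.
  rewrite !ball_mass_vsum, <- vsum_scal. apply vsum_ext. intros y _. destruct (Nat.leb _ _); ring.
Qed.

Definition ball_card (n x r : nat) : nat := (Nat.min n (x + r) + 1 - Nat.max 1 (x - r))%nat.

Lemma ball_mass_one n x r : (1 <= x)%nat -> ball_mass n (fun _ => 1) x r = INR (ball_card n x r).
Proof.
  intros Hx. rewrite ball_mass_vsum. induction n as [|n IH].
  - unfold ball_card. replace (Nat.min 0 (x + r) + 1 - Nat.max 1 (x - r))%nat with 0%nat by lia.
    reflexivity.
  - simpl vsum. rewrite IH. unfold ball_card, path_dist.
    destruct (Nat.leb_spec (x - S n + (S n - x)) r).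
    + replace (Nat.min (S n) (x + r) + 1 - Nat.max 1 (x - r))%nat
        with (S (Nat.min n (x + r) + 1 - Nat.max 1 (x - r))) by lia.
      rewrite S_INR. ring.
    + replace (Nat.min (S n) (x + r) + 1 - Nat.max 1 (x - r))%nat
        with (Nat.min n (x + r) + 1 - Nat.max 1 (x - r))%nat by lia.
      ring.
Qed.

Lemma Glb_Rbar_lb (E : R -> Prop) c : E c -> Rbar_le (Glb_Rbar E) c.
Proof. intros Hc. apply (proj1 (Glb_Rbar_correct E)), Hc. Qed.

Lemma Glb_Rbar_glb (E : R -> Prop) a : (forall c, E c -> a <= c) -> Rbar_le a (Glb_Rbar E).
Proof. intros H. apply (proj2 (Glb_Rbar_correct E)). intros c Hc. apply H, Hc. Qed.

Lemma Lub_Rbar_ub_finite (E : R -> Prop) r c : Lub_Rbar E = Finite c -> E r -> r <= c.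
Proof. intros H Hr. pose proof (proj1 (Lub_Rbar_correct E) r Hr) as Hub. rewrite H in Hub. exact Hub. Qed.

Lemma doubling_const_ball_le n mu c x k : is_measure n mu -> doubling_const n mu = Finite c ->
  vertex n x -> ball_mass n mu x (2 * k + 1) <= c * ball_mass n mu x k.
Proof.
  intros Hmu Hc Hx. pose proof (ball_mass_pos n mu x k Hmu Hx).
  assert (Hratio : ball_mass n mu x (2 * k + 1) / ball_mass n mu x k <= c)
    by (eapply Lub_Rbar_ub_finite; [exact Hc | exists x, k; auto]).
  apply Rle_div_l in Hratio; lra.
Qed.

Lemma doubling_const_ball_1 n mu c x : is_measure n mu -> doubling_const n mu = Finite c ->
  vertex n x -> ball_mass n mu x 1 <= c * mu x.
Proof.
  intros Hmu Hc Hx. rewrite <- (ball_mass_0 n mu x Hx).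
  exact (doubling_const_ball_le n mu c x 0 Hmu Hc Hx).
Qed.

Lemma doubling_const0_ball_1 n mu c x : is_measure n mu -> doubling_const0 n mu = Finite c ->
  vertex n x -> ball_mass n mu x 1 <= c * mu x.
Proof.
  intros Hmu Hc Hx. pose proof (Hmu x Hx).
  assert (Hratio : ball_mass n mu x 1 / mu x <= c)
    by (eapply Lub_Rbar_ub_finite; [exact Hc | exists x; auto]).
  apply Rle_div_l in Hratio; lra.
Qed.

Lemma least_doubling_const_le n mu B : (1 <= n)%nat -> is_measure n mu ->
  (forall x k, vertex n x -> ball_mass n mu x (2 * k + 1) <= B * ball_mass n mu x k) ->
  Rbar_le (least_doubling_const n) B.
Proof.
  intros Hn Hmu HB.
  assert (Hub : Rbar_le (doubling_const n mu) B).
  { apply (proj2 (Lub_Rbar_correct _)). intros r [x [k [Hx ->]]].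
    pose proof (ball_mass_pos n mu x k Hmu Hx). apply Rle_div_l; [lra|]. apply HB, Hx. }
  assert (Hlb : Rbar_le (ball_mass n mu 1 1 / ball_mass n mu 1 0) (doubling_const n mu))
    by (apply (proj1 (Lub_Rbar_correct _)); exists 1%nat, 0%nat; split; [unfold vertex; lia | reflexivity]).
  destruct (doubling_const n mu) as [c| |] eqn:Hc; try contradiction.
  apply Rbar_le_trans with c; [|exact Hub]. apply Glb_Rbar_lb. exists mu. auto.
Qed.

Lemma least_doubling_const_ge n a :
  (forall mu c, is_measure n mu -> doubling_const n mu = Finite c -> a <= c) ->
  Rbar_le a (least_doubling_const n).
Proof. intros H. apply Glb_Rbar_glb. intros c [mu [Hmu Hc]]. exact (H mu c Hmu Hc). Qed.

Definition theta (n : nat) : R := PI / INR (n + 1).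
Definition sine_measure (n j : nat) : R := sin (INR j * theta n).

Definition lambda_max (n : nat) : R := 1 + 2 * cos (theta n).

Lemma INR_succ_pos n : 0 < INR (n + 1).
Proof. apply lt_0_INR. lia. Qed.

Lemma theta_pos n : 0 < theta n.
Proof. apply Rdiv_lt_0_compat; [apply PI_RGT_0 | apply INR_succ_pos]. Qed.

Lemma mult_theta_succ n : INR (n + 1) * theta n = PI.
Proof. unfold theta. field. apply Rgt_not_eq, INR_succ_pos. Qed.

Lemma sine_measure_0 n : sine_measure n 0 = 0.
Proof. unfold sine_measure. rewrite Rmult_0_l. apply sin_0. Qed.

Lemma sine_measure_succ n : sine_measure n (n + 1) = 0.
Proof. unfold sine_measure. rewrite mult_theta_succ. apply sin_PI. Qed.

Lemma sine_measure_pos n j : (1 <= j <= n)%nat -> 0 < sine_measure n j.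
Proof.
  intros Hj. pose proof (theta_pos n). apply sin_gt_0.
  - apply Rmult_lt_0_compat; [apply lt_0_INR; lia | lra].
  - rewrite <- (mult_theta_succ n). apply Rmult_lt_compat_r; [lra | apply lt_INR; lia].
Qed.

Lemma sine_measure_is_measure n : is_measure n (sine_measure n).
Proof. intros v Hv. apply sine_measure_pos, Hv. Qed.

Lemma sine_measure_eigen n j : (1 <= j)%nat ->
  lambda_max n * sine_measure n j = sine_measure n (j - 1) + sine_measure n j + sine_measure n (j + 1).
Proof.
  intros Hj. unfold lambda_max, sine_measure.
  rewrite minus_INR, plus_INR by lia. simpl INR.
  replace ((INR j - 1) * theta n) with (INR j * theta n - theta n) by ring.
  replace ((INR j + 1) * theta n) with (INR j * theta n + theta n) by ring.
  rewrite sin_minus, sin_plus. ring.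
Qed.

Lemma ext0_sine_measure n a : (a <= n + 1)%nat -> ext0 n (sine_measure n) a = sine_measure n a.
Proof.
  intros Ha. destruct (Nat.eq_dec a 0) as [->|Ha0]; [rewrite sine_measure_0; reflexivity |].
  destruct (Nat.eq_dec a (n + 1)) as [->|Han]; [|apply ext0_in; lia].
  rewrite sine_measure_succ. apply ext0_gt. lia.
Qed.

Lemma sine_measure_ball_1 n x : vertex n x ->
  ball_mass n (sine_measure n) x 1 = lambda_max n * sine_measure n x.
Proof.
  intros Hx. rewrite ball_mass_1 by exact Hx. unfold vertex in Hx.
  rewrite !ext0_sine_measure by lia. rewrite sine_measure_eigen by lia. reflexivity.
Qed.

(* [mu |-> mu(B(., 1))] is self-adjoint, so pairing with its eigenvector gives an identity
   valid for every [mu]. *)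
Lemma vsum_sine_ball_1 n mu :
  vsum (fun x => sine_measure n x * ball_mass n mu x 1) n
  = lambda_max n * vsum (fun x => sine_measure n x * mu x) n.
Proof.
  set (s := sine_measure n). set (m := ext0 n mu).
  rewrite (vsum_ext _ (fun x => (s x * m (x - 1)%nat + s x * m x) + m (S x) * s x))
    by (intros x Hx; unfold m; rewrite ball_mass_1, Nat.add_1_r by (unfold vertex; lia); ring).
  rewrite !vsum_add, (vsum_shift s m n) by reflexivity.
  pose proof (vsum_shift m s n (sine_measure_0 n)) as Hshift.
  replace (s (S n)) with 0 in * by (symmetry; rewrite <- Nat.add_1_r; apply sine_measure_succ).
  replace (m (S n)) with 0 in * by (symmetry; apply ext0_gt; lia).
  rewrite Rmult_0_l, Rminus_0_r in Hshift |- *. rewrite <- Hshift, <- vsum_scal, <- !vsum_add.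
  apply vsum_ext. intros x Hx. unfold m. rewrite ext0_in by lia.
  unfold s. rewrite <- Nat.add_1_r. replace (lambda_max n * (sine_measure n x * mu x))
    with (mu x * (lambda_max n * sine_measure n x)) by ring.
  rewrite sine_measure_eigen by lia. ring.
Qed.

Lemma lambda_max_le n mu c : (1 <= n)%nat -> is_measure n mu ->
  (forall x, vertex n x -> ball_mass n mu x 1 <= c * mu x) -> lambda_max n <= c.
Proof.
  intros Hn Hmu H.
  assert (Hv1 : vertex n 1) by (unfold vertex; lia).
  assert (Hterm : forall x, vertex n x -> 0 < sine_measure n x * mu x)
    by (intros x Hx; apply Rmult_lt_0_compat; [apply sine_measure_pos, Hx | apply Hmu, Hx]).
  assert (HS : 0 < vsum (fun x => sine_measure n x * mu x) n).
  { apply Rlt_le_trans with (sine_measure n 1 * mu 1%nat); [apply Hterm, Hv1|].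
    apply (vsum_ge_term (fun x => sine_measure n x * mu x)); [|exact Hv1].
    intros x Hx. apply Rlt_le, Hterm, Hx. }
  apply Rmult_le_reg_r with (1 := HS). rewrite <- vsum_sine_ball_1, <- vsum_scal.
  apply vsum_le. intros x Hx.
  replace (c * (sine_measure n x * mu x)) with (sine_measure n x * (c * mu x)) by ring.
  apply Rmult_le_compat_l; [apply Rlt_le, sine_measure_pos, Hx | apply H, Hx].
Qed.

Lemma doubling_const0_sine_measure n : (1 <= n)%nat ->
  doubling_const0 n (sine_measure n) = Finite (lambda_max n).
Proof.
  intros Hn. apply is_lub_Rbar_unique. split.
  - intros r [x [Hx ->]]. rewrite sine_measure_ball_1 by exact Hx. simpl. right. field.
    apply Rgt_not_eq, sine_measure_pos, Hx.
  - intros b Hb. apply Hb. exists 1%nat. split; [unfold vertex; lia|].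
    rewrite sine_measure_ball_1 by (unfold vertex; lia). field.
    apply Rgt_not_eq, sine_measure_pos. lia.
Qed.

Lemma least_doubling_const0_eq n : (1 <= n)%nat -> least_doubling_const0 n = Finite (lambda_max n).
Proof.
  intros Hn. apply is_glb_Rbar_unique. split.
  - intros c [mu [Hmu Hc]]. apply (lambda_max_le n mu c Hn Hmu). intros x Hx.
    apply (doubling_const0_ball_1 n mu c x Hmu Hc Hx).
  - intros b Hb. apply Hb. exists (sine_measure n).
    split; [apply sine_measure_is_measure | apply doubling_const0_sine_measure, Hn].
Qed.

Lemma lambda_max_le_doubling_const n mu c : (1 <= n)%nat -> is_measure n mu ->
  doubling_const n mu = Finite c -> lambda_max n <= c.
Proof.
  intros Hn Hmu Hc. apply (lambda_max_le n mu c Hn Hmu). intros x Hx.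
  apply (doubling_const_ball_1 n mu c x Hmu Hc Hx).
Qed.

(* A slightly concave perturbation of the counting measure: concavity gives
   [mu(B(x,1)) <= (3 - eps) mu(x)], and since [mu] stays within [1, 1 + 1/40],
   larger balls are controlled by counting vertices. *)
Definition bump_eps (n : nat) : R := / (40 * INR (n + 1) ^ 2).
Definition bump_measure (n y : nat) : R := 1 + bump_eps n * (INR y * (INR (n + 1) - INR y)).

Lemma bump_eps_pos n : 0 < bump_eps n.
Proof. pose proof (INR_succ_pos n). apply Rinv_0_lt_compat. nra. Qed.

Lemma bump_eps_scaled n : bump_eps n * INR (n + 1) ^ 2 = 1 / 40.
Proof. pose proof (INR_succ_pos n). unfold bump_eps. field. lra. Qed.

Lemma bump_eps_le n : bump_eps n <= 1 / 40.
Proof.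
  rewrite <- (bump_eps_scaled n).
  assert (1 <= INR (n + 1)) by (apply (le_INR 1); lia).
  assert (Hsq : 1 <= INR (n + 1) ^ 2) by nra.
  pose proof (Rmult_le_compat_l (bump_eps n) _ _ (Rlt_le _ _ (bump_eps_pos n)) Hsq). lra.
Qed.

Lemma bump_measure_bounds n y : vertex n y -> 1 <= bump_measure n y <= 1 + 1 / 40.
Proof.
  intros Hy. unfold vertex in Hy. unfold bump_measure.
  pose proof (bump_eps_scaled n). pose proof (bump_eps_pos n).
  assert (1 <= INR y) by (apply (le_INR 1); lia).
  assert (INR y + 1 <= INR (n + 1)) by (rewrite plus_INR; simpl; apply Rplus_le_compat_r, le_INR; lia).
  assert (0 <= INR y * (INR (n + 1) - INR y) <= INR (n + 1) ^ 2) by nra.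
  nra.
Qed.

Lemma bump_measure_is_measure n : is_measure n (bump_measure n).
Proof. intros y Hy. pose proof (bump_measure_bounds n y Hy). lra. Qed.

Lemma ext0_bump_measure_bounds n a : 0 <= ext0 n (bump_measure n) a <= 1 + 1 / 40.
Proof.
  unfold ext0. destruct (Nat.leb_spec 1 a), (Nat.leb_spec a n); simpl; try lra.
  pose proof (bump_measure_bounds n a ltac:(unfold vertex; lia)). lra.
Qed.

Lemma bump_measure_ball_1 n x : vertex n x ->
  ball_mass n (bump_measure n) x 1 <= (3 - bump_eps n) * bump_measure n x.
Proof.
  intros Hx. rewrite ball_mass_1 by exact Hx. unfold vertex in Hx.
  pose proof (bump_measure_bounds n x ltac:(unfold vertex; lia)).
  pose proof (bump_eps_le n). pose proof (bump_eps_pos n).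
  pose proof (ext0_bump_measure_bounds n (x + 1)).
  rewrite (ext0_in n _ x) by lia.
  destruct (Nat.eq_dec x 1) as [->|Hx1]; [|destruct (Nat.eq_dec x n) as [->|Hxn]].
  - change (ext0 n (bump_measure n) (1 - 1)) with 0. nra.
  - pose proof (ext0_bump_measure_bounds n (n - 1)). rewrite (ext0_gt n _ (n + 1)) by lia. nra.
  - rewrite !ext0_in by lia.
    assert (Hconcave : bump_measure n (x - 1) + bump_measure n (x + 1) = 2 * bump_measure n x - 2 * bump_eps n)
      by (unfold bump_measure; rewrite minus_INR, (plus_INR x 1) by lia; simpl INR; ring).
    nra.
Qed.

Lemma ball_card_doubling n x k : vertex n x -> (1 <= k)%nat -> (2 <= n)%nat ->
  (ball_card n x (2 * k + 1) <= 2 * ball_card n x k + 1 /\ 2 <= ball_card n x k)%nat.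
Proof. unfold vertex, ball_card. lia. Qed.

Lemma bump_measure_ball_doubling n x k : (2 <= n)%nat -> vertex n x ->
  ball_mass n (bump_measure n) x (2 * k + 1) <= (3 - bump_eps n) * ball_mass n (bump_measure n) x k.
Proof.
  intros Hn Hx. destruct k as [|k].
  { rewrite ball_mass_0 by exact Hx. apply bump_measure_ball_1, Hx. }
  assert (Hx1 : (1 <= x)%nat) by (unfold vertex in Hx; lia).
  assert (Hupper : ball_mass n (bump_measure n) x (2 * S k + 1) <= (1 + 1 / 40) * INR (ball_card n x (2 * S k + 1))).
  { rewrite <- ball_mass_one, <- ball_mass_const by exact Hx1.
    apply ball_mass_le. intros y Hy. apply bump_measure_bounds, Hy. }
  assert (Hlower : INR (ball_card n x (S k)) <= ball_mass n (bump_measure n) x (S k)).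
  { rewrite <- ball_mass_one by exact Hx1. apply ball_mass_le. intros y Hy. apply bump_measure_bounds, Hy. }
  destruct (ball_card_doubling n x (S k) Hx ltac:(lia) Hn) as [Hc1 Hc2].
  apply le_INR in Hc1, Hc2. rewrite plus_INR, mult_INR in Hc1. simpl (INR 2) in Hc1, Hc2. simpl (INR 1) in Hc1.
  pose proof (bump_eps_le n). nra.
Qed.

Lemma least_doubling_const_lt_3 n : (2 <= n)%nat -> Rbar_lt (least_doubling_const n) 3.
Proof.
  intros Hn. apply Rbar_le_lt_trans with (3 - bump_eps n).
  - apply (least_doubling_const_le n (bump_measure n)); [lia | apply bump_measure_is_measure |].
    intros x k Hx. apply bump_measure_ball_doubling; assumption.
  - simpl. pose proof (bump_eps_pos n). lra.
Qed.

Lemma theta_le_PI_div n m : (0 < m <= n + 1)%nat -> theta n <= PI / INR m.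
Proof.
  intros Hm. unfold theta. pose proof PI_RGT_0. assert (0 < INR m) by (apply lt_0_INR; lia).
  apply Rmult_le_compat_l; [lra|]. apply Rinv_le_contravar; [lra | apply le_INR; lia].
Qed.

Lemma lambda_max_lt_3 n : lambda_max n < 3.
Proof.
  unfold lambda_max. pose proof (theta_pos n). pose proof (theta_le_PI_div n 1 ltac:(lia)).
  assert (cos (theta n) < cos 0) by (apply cos_decreasing_1; simpl INR in *; lra).
  rewrite cos_0 in *. lra.
Qed.

Lemma lambda_max_ge_2 n : (2 <= n)%nat -> 2 <= lambda_max n.
Proof.
  intros Hn. unfold lambda_max. pose proof (theta_pos n). pose proof PI_RGT_0.
  pose proof (theta_le_PI_div n 3 ltac:(lia)). replace (INR 3) with 3 in * by (simpl; ring).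
  assert (cos (PI / 3) <= cos (theta n)) by (apply cos_decr_1; lra).
  rewrite cos_PI3 in *. lra.
Qed.

Lemma cos_3x x : cos (3 * x) = 4 * cos x ^ 3 - 3 * cos x.
Proof.
  replace (3 * x) with (2 * x + x) by ring. rewrite cos_plus, cos_2a_cos, sin_2a.
  replace (2 * sin x * cos x * sin x) with (2 * cos x * (sin x * sin x)) by ring.
  pose proof (sin2_cos2 x) as Hpyth. unfold Rsqr in Hpyth.
  replace (sin x * sin x) with (1 - cos x * cos x) by lra. ring.
Qed.

(* [a = 2 cos(theta)] satisfies [a^3 - 3a - 1 = 2 cos(3 theta) - 1], positive iff [3 theta < PI/3],
   i.e. iff [n >= 9]. *)
Lemma cubic_lambda_max_pos n : (9 <= n)%nat ->
  0 < (lambda_max n - 1) ^ 3 - 3 * (lambda_max n - 1) - 1.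
Proof.
  intros Hn. unfold lambda_max.
  replace ((1 + 2 * cos (theta n) - 1) ^ 3 - 3 * (1 + 2 * cos (theta n) - 1) - 1)
    with (2 * cos (3 * theta n) - 1) by (rewrite cos_3x; ring).
  pose proof (theta_pos n). pose proof PI_RGT_0.
  pose proof (theta_le_PI_div n 10 ltac:(lia)). replace (INR 10) with 10 in * by (simpl; ring).
  assert (cos (PI / 3) < cos (3 * theta n)) by (apply cos_decreasing_1; lra).
  rewrite cos_PI3 in *. lra.
Qed.

Section Gap.

Variables (n : nat) (mu : nat -> R) (c : R).
Hypothesis Hmu : is_measure n mu.
Hypothesis Hball_1 : forall x, vertex n x -> ball_mass n mu x 1 <= c * mu x.

Let defect (x : nat) : R := c * mu x - ball_mass n mu x 1.
Let sine_mass : R := vsum (fun x => sine_measure n x * mu x) n.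

Lemma vsum_sine_defect : vsum (fun x => sine_measure n x * defect x) n = (c - lambda_max n) * sine_mass.
Proof.
  unfold defect, sine_mass.
  rewrite (vsum_ext _ (fun x => c * (sine_measure n x * mu x) + -1 * (sine_measure n x * ball_mass n mu x 1)))
    by (intros; ring).
  rewrite vsum_add, !vsum_scal, vsum_sine_ball_1. ring.
Qed.

Lemma defect_ge0 x : vertex n x -> 0 <= defect x.
Proof. intros Hx. unfold defect. pose proof (Hball_1 x Hx). lra. Qed.

Lemma sine_defect_le j : vertex n j -> sine_measure n j * defect j <= (c - lambda_max n) * sine_mass.
Proof.
  intros Hj. rewrite <- vsum_sine_defect.
  apply (vsum_ge_term (fun x => sine_measure n x * defect x)); [|exact Hj].
  intros x Hx. apply Rmult_le_pos; [apply Rlt_le, sine_measure_pos, Hx | apply defect_ge0, Hx].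
Qed.

Lemma measure_le_pow j : 0 <= c -> (1 <= j <= n)%nat -> mu j <= c ^ (j - 1) * mu 1%nat.
Proof.
  intros Hc. induction j as [|j IH]; intros Hj; [lia|].
  destruct (Nat.eq_dec j 0) as [->|Hj0]; [simpl; lra|].
  assert (Hvj : vertex n j) by (unfold vertex; lia).
  assert (Hnext : mu (S j) <= c * mu j).
  { eapply Rle_trans; [|apply Hball_1, Hvj]. rewrite ball_mass_1 by exact Hvj.
    rewrite (ext0_in n mu j), (ext0_in n mu (j + 1)) by lia. rewrite Nat.add_1_r.
    pose proof (ext0_ge0 n mu (j - 1) Hmu). pose proof (Hmu j Hvj). lra. }
  replace (S j - 1)%nat with (S (j - 1)) by lia. simpl pow.
  pose proof (IH ltac:(lia)). nra.
Qed.

Lemma sine_mass_le : 0 <= c <= 3 -> sine_mass <= INR n * 3 ^ n * mu 1%nat.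
Proof.
  intros Hc. unfold sine_mass. rewrite Rmult_assoc, <- vsum_const. apply vsum_le. intros x Hx.
  pose proof (measure_le_pow x (proj1 Hc) Hx). pose proof (sine_measure_pos n x Hx).
  assert (sine_measure n x <= 1) by apply SIN_bound.
  assert (c ^ (x - 1) <= 3 ^ n).
  { apply Rle_trans with (3 ^ (x - 1)); [apply pow_incr; lra | apply Rle_pow; [lra | lia]]. }
  pose proof (Hmu x Hx). pose proof (Hmu 1%nat ltac:(unfold vertex; lia)).
  assert (mu x <= 3 ^ n * mu 1%nat) by nra. nra.
Qed.

Lemma defect_le j : 0 <= c <= 3 -> lambda_max n <= c -> vertex n j ->
  defect j <= (c - lambda_max n) * (INR n * 3 ^ n * mu 1%nat) / sine_measure n j.
Proof.
  intros Hc Hlc Hj. pose proof (sine_measure_pos n j Hj).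
  apply Rle_div_r; [lra|]. rewrite Rmult_comm.
  apply Rle_trans with ((c - lambda_max n) * sine_mass); [apply sine_defect_le, Hj|].
  apply Rmult_le_compat_l; [lra | apply sine_mass_le, Hc].
Qed.

Lemma ball_mass_1_3_defects : (4 <= n)%nat ->
  c * ball_mass n mu 1 1 - ball_mass n mu 1 3
  = (1 + 3 * (c - 1) - (c - 1) ^ 3) * mu 1%nat + ((c - 1) ^ 2 - 1) * defect 1 + c * defect 2 + defect 3.
Proof.
  intros Hn. unfold defect.
  rewrite (ball_mass_restrict n 2 mu 1 1), (ball_mass_restrict n 3 mu 2 1),
    (ball_mass_restrict n 4 mu 3 1), (ball_mass_restrict n 4 mu 1 3)
    by (lia || (unfold path_dist; lia)).
  unfold ball_mass. simpl. ring.
Qed.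

Lemma cubic_le_defects : (4 <= n)%nat -> 2 <= c <= 3 ->
  ball_mass n mu 1 3 <= c * ball_mass n mu 1 1 ->
  ((c - 1) ^ 3 - 3 * (c - 1) - 1) * mu 1%nat <= 3 * (defect 1 + defect 2 + defect 3).
Proof.
  intros Hn Hc Hdoubling. pose proof (ball_mass_1_3_defects Hn) as Hid.
  pose proof (defect_ge0 1 ltac:(unfold vertex; lia)).
  pose proof (defect_ge0 2 ltac:(unfold vertex; lia)).
  pose proof (defect_ge0 3 ltac:(unfold vertex; lia)).
  assert (((c - 1) ^ 2 - 1) * defect 1 <= 3 * defect 1) by (apply Rmult_le_compat_r; nra).
  assert (c * defect 2 <= 3 * defect 2) by (apply Rmult_le_compat_r; lra).
  lra.
Qed.

End Gap.

Lemma cubic_le a b : 1 <= a <= b -> a ^ 3 - 3 * a - 1 <= b ^ 3 - 3 * b - 1.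
Proof.
  intros Hab.
  assert (0 <= (b - a) * (b ^ 2 + b * a + a ^ 2 - 3)) by (apply Rmult_le_pos; nra).
  nra.
Qed.

Lemma lambda_max_gap n : (9 <= n)%nat -> exists d, 0 < d /\
  forall mu c, is_measure n mu -> doubling_const n mu = Finite c -> c < 3 -> lambda_max n + d <= c.
Proof.
  intros Hn.
  set (g := (lambda_max n - 1) ^ 3 - 3 * (lambda_max n - 1) - 1).
  set (w := / sine_measure n 1 + / sine_measure n 2 + / sine_measure n 3).
  set (K := INR n * 3 ^ n).
  assert (Hs : forall j, (1 <= j <= 3)%nat -> 0 < / sine_measure n j)
    by (intros; apply Rinv_0_lt_compat, sine_measure_pos; lia).
  assert (Hg : 0 < g) by (apply cubic_lambda_max_pos, Hn).
  assert (Hw : 0 < w)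
    by (pose proof (Hs 1%nat ltac:(lia)); pose proof (Hs 2%nat ltac:(lia)); pose proof (Hs 3%nat ltac:(lia));
        unfold w; lra).
  assert (HK : 0 < K) by (apply Rmult_lt_0_compat; [apply lt_0_INR; lia | apply pow_lt; lra]).
  exists (g / (3 * w * K)). split; [apply Rdiv_lt_0_compat; [lra | nra]|].
  intros mu c Hmu Hc Hc3.
  assert (Hball_1 : forall x, vertex n x -> ball_mass n mu x 1 <= c * mu x)
    by (intros x Hx; apply (doubling_const_ball_1 n mu c x Hmu Hc Hx)).
  pose proof (lambda_max_le_doubling_const n mu c ltac:(lia) Hmu Hc) as Hlc.
  pose proof (lambda_max_ge_2 n ltac:(lia)) as Hl2.
  assert (Hmu1 : 0 < mu 1%nat) by (apply Hmu; unfold vertex; lia).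
  assert (Hcubic : g * mu 1%nat <= ((c - 1) ^ 3 - 3 * (c - 1) - 1) * mu 1%nat)
    by (apply Rmult_le_compat_r; [lra | apply cubic_le; lra]).
  pose proof (cubic_le_defects n mu c Hball_1 ltac:(lia) ltac:(lra)
    (doubling_const_ball_le n mu c 1 1 Hmu Hc ltac:(unfold vertex; lia))) as Hdefects.
  pose proof (defect_le n mu c Hmu Hball_1 1 ltac:(lra) Hlc ltac:(unfold vertex; lia)) as Hd1.
  pose proof (defect_le n mu c Hmu Hball_1 2 ltac:(lra) Hlc ltac:(unfold vertex; lia)) as Hd2.
  pose proof (defect_le n mu c Hmu Hball_1 3 ltac:(lra) Hlc ltac:(unfold vertex; lia)) as Hd3.
  fold K in Hd1, Hd2, Hd3. unfold Rdiv in Hd1, Hd2, Hd3.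
  assert (Hfinal : g * mu 1%nat <= (3 * w * K * (c - lambda_max n)) * mu 1%nat) by (unfold w; lra).
  apply Rmult_le_reg_r in Hfinal; [|exact Hmu1].
  assert (g / (3 * w * K) <= c - lambda_max n) by (apply Rle_div_l; [nra | lra]).
  lra.
Qed.

Lemma sine_measure_symm n j : (j <= n + 1)%nat -> sine_measure n (n + 1 - j) = sine_measure n j.
Proof.
  intros Hj. unfold sine_measure. rewrite minus_INR, Rmult_minus_distr_r, mult_theta_succ by exact Hj.
  apply sin_PI_x.
Qed.

Lemma sine_measure_mid n j : (2 * j = n + 1)%nat -> sine_measure n j = 1.
Proof.
  intros Hj. unfold sine_measure. replace (INR j * theta n) with (PI / 2); [apply sin_PI2|].
  rewrite <- (mult_theta_succ n), <- Hj, mult_INR. simpl INR. field.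
Qed.

(* For [n = 8] this makes [mu(B(1,3)) = lambda_max 8 * mu(B(1,1))] for the sine measure: the
   borderline case of the cubic inequality behind [lambda_max_gap]. *)
Lemma sine_measure_8_4 : sine_measure 8 4 = sine_measure 8 1 + sine_measure 8 2.
Proof.
  unfold sine_measure, theta. replace (INR (8 + 1)) with 9 by (simpl; ring).
  replace (INR 4) with 4 by (simpl; ring). replace (INR 2) with 2 by (simpl; ring). simpl INR.
  replace (4 * (PI / 9)) with (PI / 3 + PI / 9) by field.
  replace (2 * (PI / 9)) with (PI / 3 - PI / 9) by field.
  rewrite Rmult_1_l, sin_plus, sin_minus, cos_PI3. field.
Qed.

Lemma sin_lb_poly a : sin_lb a = a - a ^ 3 / 6 + a ^ 5 / 120 - a ^ 7 / 5040.
Proof.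
  unfold sin_lb, sin_approx, sin_term. cbn [sum_f_R0 Nat.mul Nat.add].
  rewrite !fact_simpl, !mult_INR. simpl. field.
Qed.

Lemma sin_ub_poly a : sin_ub a = a - a ^ 3 / 6 + a ^ 5 / 120 - a ^ 7 / 5040 + a ^ 9 / 362880.
Proof.
  unfold sin_ub, sin_approx, sin_term. cbn [sum_f_R0 Nat.mul Nat.add].
  rewrite !fact_simpl, !mult_INR. simpl. field.
Qed.

Lemma PI_approx : 3.14154 < PI < 3.1416.
Proof.
  pose proof PI2_3_2. pose proof sin_PI6. split.
  - destruct (Rlt_le_dec 3.14154 PI) as [Hlt|Hge]; [exact Hlt|]. exfalso.
    assert (sin (PI / 6) <= sin (3.14154 / 6)) by (apply sin_incr_1; lra).
    pose proof (SIN (3.14154 / 6) ltac:(lra) ltac:(lra)) as [_ Hub]. rewrite sin_ub_poly in Hub. lra.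
  - destruct (Rlt_le_dec PI 3.1416) as [Hlt|Hge]; [exact Hlt|]. exfalso.
    assert (sin (3.1416 / 6) <= sin (PI / 6)) by (apply sin_incr_1; lra).
    pose proof (SIN (3.1416 / 6) ltac:(lra) ltac:(lra)) as [Hlb _]. rewrite sin_lb_poly in Hlb. lra.
Qed.

Lemma sin_between x a b : 0 <= a <= x -> x <= b <= 3.14154 / 2 -> sin_lb a <= sin x <= sin_ub b.
Proof.
  intros Ha Hb. pose proof PI_approx. split.
  - apply Rle_trans with (sin a); [apply SIN; lra | apply sin_incr_1; lra].
  - apply Rle_trans with (sin b); [apply sin_incr_1; lra | apply SIN; lra].
Qed.

Lemma sine_measure_approx n j : INR j * 3.1416 / INR (n + 1) <= 3.14154 / 2 ->
  sin_lb (INR j * 3.14154 / INR (n + 1)) <= sine_measure n j <= sin_ub (INR j * 3.1416 / INR (n + 1)).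
Proof.
  intros Hb. pose proof PI_approx. pose proof (pos_INR j).
  assert (Hr : 0 < / INR (n + 1)) by (apply Rinv_0_lt_compat, INR_succ_pos).
  assert (0 <= INR j * / INR (n + 1)) by nra.
  unfold sine_measure, theta, Rdiv in *. apply sin_between; split; nra.
Qed.

Ltac pose_sine_recurrences n j :=
  lazymatch j with
  | O => idtac
  | S ?i =>
      pose proof (sine_measure_eigen n j ltac:(lia));
      pose proof (sine_measure_symm n j ltac:(lia));
      pose_sine_recurrences n i
  end.

Ltac pose_sine_approx n j :=
  lazymatch j with
  | O => idtac
  | S ?i =>
      let H := fresh "Happrox" in
      pose proof (sine_measure_approx n j ltac:(rewrite !INR_IZR_INZ; simpl; lra)) as H;
      rewrite sin_lb_poly, sin_ub_poly, !INR_IZR_INZ in H; simpl Z.of_nat in H;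
      pose_sine_approx n i
  end.

Ltac split_nat x := destruct x as [|x]; [| try (exfalso; lia); split_nat x].

(* A finite check: with the eigenvector relations, every ball inequality becomes linear in the
   values [sine_measure n j], which are known to about 4 decimals. *)
Ltac check_sine_doubling n x k :=
  let h := eval compute in (Nat.div2 n) in
  let m := eval compute in (Nat.div2 (S n)) in
  pose proof (sine_measure_0 n); pose proof (sine_measure_succ n);
  pose_sine_recurrences n n; pose_sine_approx n h;
  try pose proof (sine_measure_mid n m eq_refl);
  cbn [Nat.sub Nat.add] in *;
  split_nat x; split_nat k; try (exfalso; lia);
  unfold ball_mass; simpl; rewrite ?Rmult_plus_distr_l, ?Rmult_0_r; lra.

Lemma sine_measure_ball_doubling_small n x k : (3 <= n <= 8)%nat -> vertex n x -> (1 <= k <= n - 2)%nat ->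
  ball_mass n (sine_measure n) x (2 * k + 1) <= lambda_max n * ball_mass n (sine_measure n) x k.
Proof.
  intros Hn Hx Hk. unfold vertex in Hx.
  assert (Hcases : (n = 3 \/ n = 4 \/ n = 5 \/ n = 6 \/ n = 7 \/ n = 8)%nat) by lia.
  destruct Hcases as [-> | [-> | [-> | [-> | [-> | ->]]]]].
  - check_sine_doubling 3%nat x k.
  - check_sine_doubling 4%nat x k.
  - check_sine_doubling 5%nat x k.
  - check_sine_doubling 6%nat x k.
  - check_sine_doubling 7%nat x k.
  - pose proof sine_measure_8_4. check_sine_doubling 8%nat x k.
Qed.

Lemma least_doubling_const_le_lambda_max n : (2 <= n <= 8)%nat ->
  Rbar_le (least_doubling_const n) (lambda_max n).
Proof.
  intros Hn. apply (least_doubling_const_le n (sine_measure n)); [lia | apply sine_measure_is_measure |].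
  intros x k Hx. pose proof (lambda_max_ge_2 n ltac:(lia)).
  destruct (Nat.eq_dec k 0) as [->|Hk0].
  { rewrite ball_mass_0, sine_measure_ball_1 by exact Hx. lra. }
  destruct (le_lt_dec (n - 1) k) as [Hk|Hk].
  - rewrite !(ball_mass_full n _ x) by (auto; lia).
    assert (0 < vsum (sine_measure n) n).
    { rewrite <- (ball_mass_full n _ x k) by (auto; lia).
      apply ball_mass_pos; [apply sine_measure_is_measure | exact Hx]. }
    nra.
  - apply sine_measure_ball_doubling_small; [lia | exact Hx | lia].
Qed.

Lemma lambda_max_le_least_doubling_const n : (1 <= n)%nat ->
  Rbar_le (lambda_max n) (least_doubling_const n).
Proof.
  intros Hn. apply least_doubling_const_ge. intros mu c Hmu Hc.
  exact (lambda_max_le_doubling_const n mu c Hn Hmu Hc).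
Qed.

Lemma lambda_max_lt_least_doubling_const n : (9 <= n)%nat ->
  Rbar_lt (lambda_max n) (least_doubling_const n).
Proof.
  intros Hn. destruct (lambda_max_gap n Hn) as [d [Hd Hgap]].
  apply Rbar_lt_le_trans with (Rmin 3 (lambda_max n + d)).
  - apply Rmin_glb_lt; [apply lambda_max_lt_3 | simpl; lra].
  - apply least_doubling_const_ge. intros mu c Hmu Hc.
    destruct (Rlt_le_dec c 3) as [Hc3|Hc3].
    + apply Rle_trans with (lambda_max n + d); [apply Rmin_r | exact (Hgap mu c Hmu Hc Hc3)].
    + apply Rle_trans with 3; [apply Rmin_l | exact Hc3].
Qed.

Theorem theorem6p5 (n : nat) (hn : (2 <= n)%nat) :
  least_doubling_const0 n = Finite (1 + 2 * cos (PI / INR (n + 1)))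
  /\ Rbar_le (least_doubling_const0 n) (least_doubling_const n)
  /\ Rbar_lt (least_doubling_const n) (Finite 3)
  /\ (least_doubling_const0 n = least_doubling_const n <-> (2 <= n <= 8)%nat).
Proof.
  rewrite (least_doubling_const0_eq n) by lia.
  pose proof (lambda_max_le_least_doubling_const n ltac:(lia)) as Hlower.
  split; [reflexivity|]. split; [exact Hlower|].
  split; [apply least_doubling_const_lt_3, hn|]. split.
  - intros Heq. destruct (le_lt_dec n 8) as [Hle|Hgt]; [lia|].
    pose proof (lambda_max_lt_least_doubling_const n Hgt) as Hgap.
    rewrite <- Heq in Hgap. simpl in Hgap. lra.
  - intros Hsmall. apply Rbar_le_antisym; [exact Hlower | apply least_doubling_const_le_lambda_max, Hsmall].
Qed.
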